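(* Let $(t_i)_{i\in\mathbb{N}}$ be a sequence of real numbers that are algebraically independent over $\mathbb{Q}$, and for distinct $i,j\in\mathbb{N}$ set $P_{i,j} = (t_i + t_j,\ t_i^2 + t_it_j + t_j^2)\in\mathbb{R}^2$ (so $P_{i,j}=P_{j,i}$). Let $i,j,k,\ell,m,n$ be pairwise distinct indices. Then: (a) $P_{i,j}$, $P_{j,k}$, $P_{i,k}$ are collinear; (b) $P_{i,j}$, $P_{i,k}$, $P_{i,\ell}$ are not collinear; (c) $P_{i,j}$, $P_{j,k}$, $P_{k,\ell}$ are not collinear; (d) $P_{i,j}$, $P_{i,k}$, $P_{\ell,m}$ are not collinear; (e) $P_{i,j}$, $P_{k,\ell}$, $P_{m,n}$ are not collinear. *)

From HB Require Import structures.
From mathcomp Require Import all_boot all_order all_algebra.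
From mathcomp Require Import reals.
From mathcomp Require Import mpoly.
Set Implicit Arguments. Unset Strict Implicit. Unset Printing Implicit Defensive.
Import Order.TTheory GRing.Theory Num.Theory.
Local Open Scope ring_scope.

Definition alg_indep_Q (R : realType) (t : nat -> R) : Prop :=
  forall (n : nat) (f : 'I_n -> nat), injective f ->
  forall p : {mpoly rat[n]}, p != 0 ->
    (map_mpoly (ratr : rat -> R) p).@[fun i => t (f i)] != 0.

Definition Ppt (R : realType) (t : nat -> R) (i j : nat) : R * R :=
  (t i + t j, t i ^+ 2 + t i * t j + t j ^+ 2).

Definition collinear (R : realType) (a b c : R * R) : Prop :=
  (b.1 - a.1) * (c.2 - a.2) - (b.2 - a.2) * (c.1 - a.1) = 0.

From HB Require Import structures.
From mathcomp Require Import all_boot all_order all_algebra.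
From mathcomp Require Import reals.
From mathcomp Require Import mpoly.
From mathcomp Require Import ring.
Import Order.TTheory GRing.Theory Num.Theory.
Local Open Scope ring_scope.

(* Each collinearity determinant is a polynomial with rational coefficients in
   at most six of the t_i.  Identity (a) holds in any commutative ring.  For
   (b)-(e) the polynomial is nonzero, since it does not vanish at the rational
   point t = (0, 1, 2, 3, 4, 5); algebraic independence then forbids it to
   vanish at the t_i. *)

Definition pt {T : comPzRingType} (a b : T) : T * T :=
  (a + b, a ^+ 2 + a * b + b ^+ 2).

Definition cdet {T : comPzRingType} (x y z : T * T) : T :=
  (y.1 - x.1) * (z.2 - x.2) - (y.2 - x.2) * (z.1 - x.1).

Lemma collinear_Ppt (R : realType) (t : nat -> R) (a b c d e g : nat) :
  collinear (Ppt t a b) (Ppt t c d) (Ppt t e g) <->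
  cdet (pt (t a) (t b)) (pt (t c) (t d)) (pt (t e) (t g)) = 0.
Proof. by []. Qed.

Lemma cdet_pt_triangle (T : comPzRingType) (a b c : T) :
  cdet (pt a b) (pt b c) (pt a c) = 0.
Proof. rewrite /cdet /pt /=; ring. Qed.

Lemma rmorph_cdet (T U : comPzRingType) (phi : {rmorphism T -> U}) a b c d e g :
  phi (cdet (pt a b) (pt c d) (pt e g)) =
  cdet (pt (phi a) (phi b)) (pt (phi c) (phi d)) (pt (phi e) (phi g)).
Proof. by rewrite /cdet /pt /= !(rmorphB, rmorphM, rmorphD, rmorphXn). Qed.

Lemma alg_indep_meval_neq0 (R : realType) (t : nat -> R) (n : nat)
    (f : 'I_n -> nat) (v : 'I_n -> rat) (p : {mpoly rat[n]}) :
  alg_indep_Q t -> injective f -> p.@[v] != 0 ->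
  (map_mpoly (ratr : rat -> R) p).@[fun x => t (f x)] != 0.
Proof.
move=> ht injf pv_neq0; apply: (ht _ _ injf).
by apply: contraNneq pv_neq0 => ->; rewrite meval0.
Qed.

Lemma alg_indep_cdet_neq0 (R : realType) (t : nat -> R) (s : seq nat)
    (v : 'I_(size s) -> rat) (a b c d e g : 'I_(size s)) :
  alg_indep_Q t -> uniq s ->
  cdet (pt (v a) (v b)) (pt (v c) (v d)) (pt (v e) (v g)) != 0 ->
  cdet (pt (t (nth 0%N s a)) (t (nth 0%N s b)))
       (pt (t (nth 0%N s c)) (t (nth 0%N s d)))
       (pt (t (nth 0%N s e)) (t (nth 0%N s g))) != 0.
Proof.
move=> ht s_uniq v_neq0.
have nth_inj : injective (fun x : 'I_(size s) => nth 0%N s x).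
  by move=> x y /eqP; rewrite nth_uniq // => /eqP/val_inj.
pose p : {mpoly rat[size s]} := cdet (pt 'X_a 'X_b) (pt 'X_c 'X_d) (pt 'X_e 'X_g).
have := @alg_indep_meval_neq0 R t _ _ v p ht nth_inj.
rewrite /p (@rmorph_cdet _ _ (meval v)) (@rmorph_cdet _ _ (map_mpoly ratr)).
by rewrite (@rmorph_cdet _ _ (meval _)) /= !map_mpolyX !mevalXU; apply.
Qed.

Theorem claim2p1 (R : realType) (t : nat -> R) (ht : alg_indep_Q t)
  (i j k l m n : nat) (hdist : uniq [:: i; j; k; l; m; n]) :
  [/\ collinear (Ppt t i j) (Ppt t j k) (Ppt t i k),
      ~ collinear (Ppt t i j) (Ppt t i k) (Ppt t i l),
      ~ collinear (Ppt t i j) (Ppt t j k) (Ppt t k l),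
      ~ collinear (Ppt t i j) (Ppt t i k) (Ppt t l m)
    & ~ collinear (Ppt t i j) (Ppt t k l) (Ppt t m n)].
Proof.
pose o x (x_lt6 : (x < 6)%N) : 'I_6 := Ordinal x_lt6.
have neq0 a b c d e g :=
  @alg_indep_cdet_neq0 R t _ (fun x => (x : nat)%:R) a b c d e g ht hdist.
split; rewrite collinear_Ppt; first exact: cdet_pt_triangle.
- by apply/eqP/(neq0 (o 0 isT) (o 1 isT) (o 0 isT) (o 2 isT) (o 0 isT) (o 3 isT)); vm_compute.
- by apply/eqP/(neq0 (o 0 isT) (o 1 isT) (o 1 isT) (o 2 isT) (o 2 isT) (o 3 isT)); vm_compute.
- by apply/eqP/(neq0 (o 0 isT) (o 1 isT) (o 0 isT) (o 2 isT) (o 3 isT) (o 4 isT)); vm_compute.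
- by apply/eqP/(neq0 (o 0 isT) (o 1 isT) (o 2 isT) (o 3 isT) (o 4 isT) (o 5 isT)); vm_compute.
Qed.
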